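(* Let $\mathcal{A}$ be a central, essential arrangement of hyperplanes in $\mathbb{R}^d$ and fix a chamber $c_0$. Then for chambers $c$, the set $L_1(c_0,c)$ determines $c$ uniquely. Moreover, fixing a minimal gallery $r_0$ from $c_0$ to $-c_0$, for minimal galleries $r$ from $c_0$ to $-c_0$ the set $L_2(r_0,r)$ determines $r$ uniquely.
   Context: A central, essential arrangement is a finite set of linear hyperplanes in $\mathbb{R}^d$ with common intersection $\{0\}$. Chambers are connected components of the complement of the union of the hyperplanes. $L_1(c,c')$ is the set of hyperplanes separating chambers $c,c'$. A minimal gallery from $c$ to $c'$ is a shortest path in the graph on chambers where $c,c'$ are adjacent iff $|L_1(c,c')|=1$; a minimal gallery from $c_0$ to $-c_0$ crosses every hyperplane exactly once. $L_2$ is the set of codimension-two subspaces arising as intersections of hyperplanes of $\mathcal{A}$. For minimal galleries $r,r'$ from $c_0$ to $-c_0$, $L_2(r,r')$ is the set of $X\in L_2$ such that $r$ and $r'$ cross the hyperplanes containing $X$ in different orders. *)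

From HB Require Import structures.
From mathcomp Require Import all_boot all_order all_algebra.
From mathcomp Require Import all_classical all_reals all_analysis.

Set Implicit Arguments.
Unset Strict Implicit.
Unset Printing Implicit Defensive.

Import Order.TTheory GRing.Theory Num.Theory.
Import numFieldNormedType.Exports.
Local Open Scope classical_set_scope.
Local Open Scope ring_scope.

(* An arrangement of n linear hyperplanes in R^d (vectors = row vectors
   'rV[R]_d, with the product topology of mathcomp-analysis) is given by
   normal vectors a i; hyperplane i is the kernel of x |-> <x, a i>. *)

Definition lin_form (R : realType) (d n : nat) (a : 'I_n -> 'rV[R]_d)
  (i : 'I_n) (x : 'rV[R]_d) : R := (x *m (a i)^T) 0 0.

Definition hyp (R : realType) (d n : nat) (a : 'I_n -> 'rV[R]_d)
  (i : 'I_n) : set 'rV[R]_d := [set x | lin_form a i x = 0].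

Definition arrangement (R : realType) (d n : nat) (a : 'I_n -> 'rV[R]_d) :=
  (forall i, a i != 0) /\ injective (hyp a).

(* Central: all hyperplanes are linear, so they contain 0 (automatic).
   Essential: the common intersection is {0}. *)
Definition essential (R : realType) (d n : nat) (a : 'I_n -> 'rV[R]_d) :=
  [set x | forall i, hyp a i x] = [set 0].

Definition arr_complement (R : realType) (d n : nat) (a : 'I_n -> 'rV[R]_d)
  : set 'rV[R]_d := [set x | forall i, ~ hyp a i x].

Definition is_chamber (R : realType) (d n : nat) (a : 'I_n -> 'rV[R]_d)
  (C : set 'rV[R]_d) :=
  exists x, arr_complement a x /\ C = connected_component (arr_complement a) x.

Definition opp_chamber (R : realType) (d : nat) (C : set 'rV[R]_d)
  : set 'rV[R]_d := (fun x => - x) @` C.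

Definition separates (R : realType) (d n : nat) (a : 'I_n -> 'rV[R]_d)
  (i : 'I_n) (c c' : set 'rV[R]_d) :=
  exists x y, [/\ c x, c' y & lin_form a i x * lin_form a i y < 0].

Definition L1 (R : realType) (d n : nat) (a : 'I_n -> 'rV[R]_d)
  (c c' : set 'rV[R]_d) : {set 'I_n} :=
  [set i | `[< separates a i c c' >]].

Definition adjacent (R : realType) (d n : nat) (a : 'I_n -> 'rV[R]_d)
  (c c' : set 'rV[R]_d) := #|L1 a c c'| = 1%N.

Definition gallery (R : realType) (d n : nat) (a : 'I_n -> 'rV[R]_d)
  (r : seq (set 'rV[R]_d)) (c c' : set 'rV[R]_d) :=
  [/\ r <> [::], head set0 r = c, last set0 r = c',
      (forall C, C \in r -> is_chamber a C) &
      (forall k, (k.+1 < size r)%N ->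
         adjacent a (nth set0 r k) (nth set0 r k.+1))].

Definition minimal_gallery (R : realType) (d n : nat) (a : 'I_n -> 'rV[R]_d)
  (r : seq (set 'rV[R]_d)) (c c' : set 'rV[R]_d) :=
  gallery a r c c' /\
  forall r', gallery a r' c c' -> (size r <= size r')%N.

Definition crosses_at (R : realType) (d n : nat) (a : 'I_n -> 'rV[R]_d)
  (r : seq (set 'rV[R]_d)) (k : nat) (i : 'I_n) :=
  (k.+1 < size r)%N /\ i \in L1 a (nth set0 r k) (nth set0 r k.+1).

Definition crosses_before (R : realType) (d n : nat) (a : 'I_n -> 'rV[R]_d)
  (r : seq (set 'rV[R]_d)) (i j : 'I_n) :=
  exists k l, [/\ (k < l)%N, crosses_at a r k i & crosses_at a r l j].

Definition codim2_subspace (R : realType) (d : nat) (X : set 'rV[R]_d) :=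
  exists B : 'M[R]_d, (\rank B + 2)%N = d /\ X = [set x | (x <= B)%MS].

Definition L2 (R : realType) (d n : nat) (a : 'I_n -> 'rV[R]_d)
  : set (set 'rV[R]_d) :=
  [set X | codim2_subspace X /\
     exists S : {set 'I_n}, X = [set x | forall i, i \in S -> hyp a i x]].

Definition L2g (R : realType) (d n : nat) (a : 'I_n -> 'rV[R]_d)
  (r r' : seq (set 'rV[R]_d)) : set (set 'rV[R]_d) :=
  [set X | L2 a X /\
     exists i j, [/\ X `<=` hyp a i, X `<=` hyp a j,
                     crosses_before a r i j & crosses_before a r' j i]].

(* A chamber is the set of points with a fixed sign vector, so it is determined by the
   set of hyperplanes separating it from c0.  Along a minimal gallery from c0 to -c0 this
   set grows by one hyperplane at each step (a generic segment from c0 to -c0 shows that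
   minimal galleries have n + 1 chambers), so a minimal gallery amounts to a maximal chain
   of subsets, i.e. to a total order on the hyperplanes.  The hyperplanes through a
   codimension-two subspace X = H_i \cap H_j form a pencil: any three of them satisfy a linear
   relation, hence one of them lies between the other two for every chamber, and two
   minimal galleries either order the whole pencil in the same way or in opposite ways.
   So L2(r0, r) tells, for each pair i <> j, whether r orders H_i, H_j as r0 does; this
   determines the order, hence r. *)

From Pilot Require Import Defs.
From mathcomp Require Import all_boot all_order all_algebra.
From mathcomp Require Import all_classical all_reals all_analysis.
From mathcomp Require Import ring lra zify.
Import numFieldNormedType.Exports.
Local Open Scope classical_set_scope.
Local Open Scope ring_scope.
Set Implicit Arguments.
Unset Strict Implicit.
Unset Printing Implicit Defensive.
Import Order.TTheory GRing.Theory Num.Theory.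

Lemma exists_rising_step (P : nat -> bool) k m : (k <= m)%N -> ~~ P k -> P m ->
  exists l, [/\ (k <= l)%N, (l < m)%N, ~~ P l & P l.+1].
Proof.
elim: m => [|m IH] km Pk Pm.
  by move: km; rewrite leqn0 => /eqP ek; move: Pm; rewrite -ek (negbTE Pk).
have [Pm'|nPm] := boolP (P m); last first.
  exists m; split => //; rewrite leq_eqVlt in km; case/orP: km => [/eqP ek|//].
  by move: Pm; rewrite -ek (negbTE Pk).
have km' : (k <= m)%N.
  rewrite leq_eqVlt in km; case/orP: km => [/eqP ek|//].
  by move: Pm; rewrite -ek (negbTE Pk).
by have [l [? ? ? ?]] := IH km' Pk Pm'; exists l; split => //; rewrite ltnS ltnW.
Qed.

Section MaximalChains.
Local Close Scope classical_set_scope.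
Variable n : nat.
Implicit Types (F G : nat -> {set 'I_n}) (i j p q s : 'I_n).

Definition maximal_chain F :=
  [/\ F 0%N = finset.set0, F n = finset.setT,
      forall k, (k < n)%N -> F k \subset F k.+1 &
      forall k, (k < n)%N -> #|F k.+1 :\: F k| = 1%N].

Definition chain_before F i j := exists k, [/\ (k <= n)%N, i \in F k & j \notin F k].

Definition chain_between F q p s := forall k, (k <= n)%N ->
  (p \in F k -> s \in F k -> q \in F k) /\ (p \notin F k -> s \notin F k -> q \notin F k).

Definition flipped F0 F i j :=
  (chain_before F0 i j /\ chain_before F j i) \/ (chain_before F0 j i /\ chain_before F i j).

Lemma flipped_sym F0 F i j : flipped F0 F i j <-> flipped F0 F j i.
Proof. rewrite /flipped; tauto. Qed.

Section OneChain.
Variable F : nat -> {set 'I_n}.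
Hypothesis hF : maximal_chain F.

Lemma maximal_chain_sub k l : (k <= l)%N -> (l <= n)%N -> F k \subset F l.
Proof.
case: hF => _ _ hs _; elim: l => [|l IH] kl ln.
  by move: kl; rewrite leqn0 => /eqP ->.
rewrite leq_eqVlt in kl; case/orP: kl => [/eqP ->//|kl].
exact: fintype.subset_trans (IH kl (ltnW ln)) (hs _ ln).
Qed.

Lemma maximal_chain_mem k l i : (k <= l)%N -> (l <= n)%N -> i \in F k -> i \in F l.
Proof. by move=> kl ln; apply: fintype.subsetP (maximal_chain_sub kl ln) i. Qed.

Lemma card_maximal_chain k : (k <= n)%N -> #|F k| = k.
Proof.
case: hF => h0 _ hs hc; elim: k => [|k IH] kn; first by rewrite h0 cards0.
have := hc _ kn; rewrite -(cardsID (F k) (F k.+1)) (finset.setIidPr (hs _ kn)).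
by rewrite IH ?(ltnW kn) // => ->; rewrite addn1.
Qed.

Lemma chain_before_total i j : i != j -> chain_before F i j \/ chain_before F j i.
Proof.
case: hF => h0 hn _ hc ij.
have e0 : ~~ ((i \in F 0) || (j \in F 0)) by rewrite h0 !inE.
have en : (i \in F n) || (j \in F n) by rewrite hn !inE.
have [l [_ ln]] := @exists_rising_step (fun k => (i \in F k) || (j \in F k)) 0 n
  (leq0n n) e0 en.
rewrite negb_or => /andP[il jl] ijl1.
have /eqP/cards1P [e he] := hc l ln.
have inl1 k : k \in F l.+1 -> k \notin F l -> k = e.
  by move=> k1 k0; apply/set1P; rewrite -he inE k1 k0.
case/orP: ijl1 => [il1|jl1]; [left|right]; exists l.+1; split => //; apply/negP.
- by move=> jl1; move/eqP: ij; apply; rewrite (inl1 i il1 il) (inl1 j jl1 jl).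
- by move=> il1; move/eqP: ij; apply; rewrite (inl1 i il1 il) (inl1 j jl1 jl).
Qed.

Lemma chain_before_asym i j : chain_before F i j -> ~ chain_before F j i.
Proof.
move=> [k [kn ik jk]] [l [ln jl il]].
have [kl|lk] := leqP k l.
  by move: il; rewrite (maximal_chain_mem kl ln ik).
by move: jk; rewrite (maximal_chain_mem (ltnW lk) kn jl).
Qed.

Lemma chain_before_trans i j p : chain_before F i j -> chain_before F j p ->
  chain_before F i p.
Proof.
move=> [k [kn ik jk]] [l [ln jl pl]].
have [kl|lk] := leqP k l; first by exists l; split; rewrite ?(maximal_chain_mem kl ln ik).
by move: jk; rewrite (maximal_chain_mem (ltnW lk) kn jl).
Qed.

Lemma chain_before_neq i j : chain_before F i j -> i != j.
Proof. by move=> [k [_ ik jk]]; apply/eqP => e; move: jk; rewrite -e ik. Qed.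

Lemma chain_between_before p q s : p != q -> q != s -> chain_between F q p s ->
  chain_before F p q <-> chain_before F q s.
Proof.
move=> pq qs hb; split.
  move=> [k [kn pk qk]]; have [//|[l [ln sl ql]]] := chain_before_total qs.
  have [kl|lk] := leqP k l.
    by move: ql; rewrite ((hb l ln).1 (maximal_chain_mem kl ln pk) sl).
  by move: qk; rewrite ((hb k kn).1 pk (maximal_chain_mem (ltnW lk) kn sl)).
move=> [k [kn qk sk]]; have [//|[l [ln ql pl]]] := chain_before_total pq.
have [kl|lk] := leqP k l.
  have pk : p \notin F k by apply: contra pl; apply: maximal_chain_mem.
  by move: ((hb k kn).2 pk sk); rewrite qk.
have sl : s \notin F l by apply: contra sk; apply: maximal_chain_mem => //; apply: ltnW.
by move: ((hb l ln).2 pl sl); rewrite ql.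
Qed.

Lemma chain_between_orders p q s : p != q -> q != s -> p != s -> chain_between F q p s ->
  let D := chain_before F p q in
  [/\ chain_before F q p <-> ~ D, chain_before F q s <-> D, chain_before F s q <-> ~ D,
      chain_before F p s <-> D & chain_before F s p <-> ~ D].
Proof.
move=> pq qs ps hb D.
have := chain_between_before pq qs hb.
have := chain_before_total pq; have := chain_before_total qs.
have := chain_before_total ps.
have := @chain_before_asym p q; have := @chain_before_asym q s.
have := @chain_before_asym p s.
have := @chain_before_trans p q s; have := @chain_before_trans s q p.
by rewrite /D; split; tauto.
Qed.

End OneChain.

Lemma maximal_chain_eq F G : maximal_chain F -> maximal_chain G ->
  (forall i j, chain_before F i j <-> chain_before G i j) ->
  forall k, (k <= n)%N -> F k = G k.
Proof.
move=> hF hG hb k kn.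
suff sub F1 F2 : maximal_chain F1 -> maximal_chain F2 ->
    (forall i j, chain_before F1 i j -> chain_before F2 i j) -> F1 k \subset F2 k.
  by apply/eqP; rewrite finset.eqEsubset !sub // => i j /hb.
move=> h1 h2 h12; apply/fintype.subsetP => i i1; apply/negPn/negP => i2.
have /fintype.subsetPn [j j2 j1] : ~~ (F2 k \subset F1 k).
  apply: contraL i2 => s21.
  have -> : F2 k = F1 k.
    apply/eqP; rewrite eqEcard s21 (card_maximal_chain h1 kn).
    by rewrite (card_maximal_chain h2 kn) leqnn.
  by rewrite i1.
by apply: (chain_before_asym h2 (h12 i j _)); exists k.
Qed.

Section TwoChains.
Variables F0 F : nat -> {set 'I_n}.
Hypotheses (hF0 : maximal_chain F0) (hF : maximal_chain F).

Lemma flipped_between p q s : p != q -> q != s -> p != s ->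
  chain_between F0 q p s -> chain_between F q p s ->
  (flipped F0 F p q <-> flipped F0 F q s) /\ (flipped F0 F p q <-> flipped F0 F p s).
Proof.
move=> pq qs ps b0 b.
have /= [? ? ? ? ?] := chain_between_orders hF0 pq qs ps b0.
have /= [? ? ? ? ?] := chain_between_orders hF pq qs ps b.
rewrite /flipped; tauto.
Qed.

Variable I : pred 'I_n.
Hypothesis middle : forall p q s, p \in I -> q \in I -> s \in I ->
  p != q -> q != s -> p != s ->
  [\/ chain_between F0 q p s /\ chain_between F q p s,
      chain_between F0 p q s /\ chain_between F p q s |
      chain_between F0 s p q /\ chain_between F s p q].

Lemma flipped_swap_right p q s : p \in I -> q \in I -> s \in I -> p != q -> p != s ->
  flipped F0 F p q <-> flipped F0 F p s.
Proof.
move=> pI qI sI pq ps; have [<-//|qs] := eqVneq q s.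
have qp : q != p by rewrite eq_sym.
have sp : s != p by rewrite eq_sym.
have sq : s != q by rewrite eq_sym.
case: (middle pI qI sI pq qs ps) => [[b0 b]|[b0 b]|[b0 b]].
- exact: (flipped_between pq qs ps b0 b).2.
- have [e1 e2] := flipped_between qp ps qs b0 b.
  by rewrite flipped_sym e1.
- have [e1 e2] := flipped_between ps sq pq b0 b.
  by rewrite e2.
Qed.

Lemma flipped_all p q u v : p \in I -> q \in I -> u \in I -> v \in I ->
  p != q -> u != v -> flipped F0 F p q <-> flipped F0 F u v.
Proof.
move=> pI qI uI vI pq uv.
have [vp|vp] := eqVneq v p.
  subst v; rewrite (flipped_swap_right pI qI uI pq) ?(eq_sym p) //.
  exact: flipped_sym.
rewrite (flipped_swap_right pI qI vI pq) ?(eq_sym p) // flipped_sym.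
rewrite (flipped_swap_right vI pI uI vp) ?(eq_sym v) //.
exact: flipped_sym.
Qed.

End TwoChains.

Lemma chain_before_of_flipped F0 F1 F2 i j :
  maximal_chain F0 -> maximal_chain F1 -> maximal_chain F2 -> i != j ->
  (flipped F0 F1 i j <-> flipped F0 F2 i j) ->
  (chain_before F1 i j <-> chain_before F2 i j).
Proof.
move=> h0 h1 h2 ij; rewrite /flipped.
have := chain_before_total h0 ij; have := chain_before_total h1 ij.
have := chain_before_total h2 ij.
have := @chain_before_asym _ h0 i j; have := @chain_before_asym _ h1 i j.
have := @chain_before_asym _ h2 i j.
tauto.
Qed.

End MaximalChains.

Lemma mulrr_gt0 (R : realDomainType) (r : R) : r != 0 -> 0 < r * r.
Proof. by move=> r0; rewrite -expr2 exprn_even_gt0. Qed.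

Lemma mulr_gt0_same_sign (R : realDomainType) (y z : R) : y != 0 -> z != 0 ->
  (y < 0) = (z < 0) -> 0 < y * z.
Proof.
move=> y0 z0 e; rewrite ltNge le_eqVlt negb_or mulf_eq0 (negbTE y0) (negbTE z0).
by rewrite neq0_mulr_lt0 // e addbb.
Qed.

Section SignCells.
Variables (R : realType) (d n : nat) (a : 'I_n -> 'rV[R]_d).
Local Notation f := (lin_form a).
Local Notation comp := (arr_complement a).

Lemma lin_formD i x y : f i (x + y) = f i x + f i y.
Proof. by rewrite /lin_form mulmxDl mxE. Qed.

Lemma lin_formZ i k x : f i (k *: x) = k * f i x.
Proof. by rewrite /lin_form -scalemxAl mxE. Qed.

Lemma lin_formN i x : f i (- x) = - f i x.
Proof. by rewrite /lin_form mulNmx mxE. Qed.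

Lemma continuous_lin_form i : continuous (f i).
Proof.
have -> : f i = fun x : 'rV[R]_d => \sum_(k <- index_enum 'I_d) x 0 k * (a i)^T k 0.
  by apply: funext => x; rewrite /lin_form mxE.
elim: (index_enum 'I_d) => [|k s IH].
  under eq_fun do rewrite big_nil; exact: cst_continuous.
under eq_fun do rewrite big_cons.
move=> x; apply: (@continuousD R R^o _ (fun x : 'rV[R]_d => x 0 k * (a i)^T k 0)); last exact: IH.
exact: (@continuousM R _ (fun x : 'rV[R]_d => x 0 k) (fun=> (a i)^T k 0) x
  (@coord_continuous R 1 d 0 k x) (@cst_continuous _ R ((a i)^T k 0) x)).
Qed.

Definition sign_cell (x : 'rV[R]_d) : set 'rV[R]_d := [set y | forall i, 0 < f i x * f i y].

Lemma lin_form_neq0 x i : comp x -> f i x != 0.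
Proof. by move=> cx; apply/eqP => h; apply: (cx i). Qed.

Lemma sign_cell_sub x : sign_cell x `<=` comp.
Proof. by move=> y sy i hy; have := sy i; rewrite /hyp /= in hy; rewrite hy mulr0 ltxx. Qed.

Lemma sign_cell_refl x : comp x -> sign_cell x x.
Proof. by move=> cx i; apply/mulrr_gt0/lin_form_neq0. Qed.

Lemma sign_cell_eq x y : sign_cell x y -> sign_cell x = sign_cell y.
Proof. by move=> sxy; apply/seteqP; split => z sz i; have := sxy i; have := sz i; nra. Qed.

Lemma sign_cell_sub_component x : comp x -> sign_cell x `<=` connected_component comp x.
Proof.
move=> cx y sy; pose g t : 'rV[R]_d := (1 - t) *: x + t *: y.
have gc : continuous g.
  move=> t; apply: (@continuousD R _ _ (fun t : R => (1 - t) *: x) (fun t => t *: y) t).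
    apply: (@continuousZr_tmp R _ _ (fun t : R => 1 - t) x t).
    by apply: (@continuousB R R^o _ (fun=> 1) id t); [exact: cst_continuous|exact: cvg_id].
  by apply: (@continuousZr_tmp R _ _ id y t); exact: cvg_id.
have seg_sub : g @` `[0, 1] `<=` comp.
  apply: subset_trans (@sign_cell_sub x); move=> _ [t /= + <-] i.
  rewrite in_itv /= => /andP[t0 t1]; rewrite /g lin_formD !lin_formZ.
  have -> : f i x * ((1 - t) * f i x + t * f i y) =
    (1 - t) * (f i x * f i x) + t * (f i x * f i y) by ring.
  move: (sy i) (mulrr_gt0 (lin_form_neq0 i cx)).
  move: (f i x * f i y) (f i x * f i x) => A B; nra.
have seg_conn : connected (g @` `[0, 1]).
  apply: connected_continuous_connected; first exact: segment_connected.
  exact: continuous_subspaceT.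
apply: (connected_component_max _ seg_sub seg_conn).
  by exists 0; [rewrite /= in_itv /= lexx ler01|rewrite /g subr0 scale1r scale0r addr0].
by exists 1; [rewrite /= in_itv /= lexx ler01|rewrite /g subrr scale1r scale0r add0r].
Qed.

(* A linear form takes an interval of values on a connected set, so it cannot change
   sign on a component of the complement without vanishing there. *)
Lemma component_sub_sign_cell x : comp x -> connected_component comp x `<=` sign_cell x.
Proof.
move=> cx y cy i; have cyc := connected_component_sub cy.
have I : is_interval (f i @` connected_component comp x).
  apply/connected_intervalP; apply: connected_continuous_connected.
    exact: component_connected.
  exact/continuous_subspaceT/continuous_lin_form.
have hx := lin_form_neq0 i cx; have hy := lin_form_neq0 i cyc.
rewrite ltNge; apply/negP => hle.
have fx : (f i @` connected_component comp x) (f i x).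
  by exists x => //; apply: connected_component_refl.
have fy : (f i @` connected_component comp x) (f i y) by exists y.
suff [z cz fz0] : (f i @` connected_component comp x) 0.
  by apply: (connected_component_sub cz i).
have [fx0|fx0] := ltP (f i x) 0.
  apply: (I _ _ fx fy); rewrite (ltW fx0) /= leNgt; apply/negP => fy0.
  by have := mulrr_gt0 hx; nra.
apply: (I _ _ fy fx); rewrite fx0 andbT leNgt; apply/negP => fy0.
have : 0 < f i x by rewrite lt_neqAle eq_sym hx fx0.
nra.
Qed.

Lemma component_sign_cell x : comp x -> connected_component comp x = sign_cell x.
Proof.
by move=> cx; apply/seteqP; split; [exact: component_sub_sign_cell|exact: sign_cell_sub_component].
Qed.

Lemma chamber_sign_cell C : is_chamber a C -> exists2 x, comp x & C = sign_cell x.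
Proof. by move=> [x [cx ->]]; exists x => //; rewrite component_sign_cell. Qed.

Lemma sign_cell_chamber x : comp x -> is_chamber a (sign_cell x).
Proof. by move=> cx; exists x; split => //; rewrite component_sign_cell. Qed.

Lemma L1_sign_cell x y i : comp x -> comp y ->
  (i \in L1 a (sign_cell x) (sign_cell y)) = (f i x * f i y < 0).
Proof.
move=> cx cy; rewrite inE; apply/asboolP/idP => [[u [v [su sv]]]|h].
  by have := su i; have := sv i; nra.
by exists x, y; split => //; apply: sign_cell_refl.
Qed.

End SignCells.

Section BaseChamber.
Variables (R : realType) (d n : nat) (a : 'I_n -> 'rV[R]_d).
Local Notation f := (lin_form a).
Local Notation comp := (arr_complement a).
Variable x0 : 'rV[R]_d.
Hypothesis hx0 : comp x0.
Local Notation c0 := (sign_cell a x0).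

Lemma L1_sign_cell_xor y z : comp y -> comp z -> forall i,
  (i \in L1 a (sign_cell a y) (sign_cell a z)) =
  ((i \in L1 a c0 (sign_cell a y)) != (i \in L1 a c0 (sign_cell a z))).
Proof.
move=> cy cz i; rewrite !L1_sign_cell // !neq0_mulr_lt0 ?lin_form_neq0 //.
by case: (f i x0 < 0); case: (f i y < 0); case: (f i z < 0).
Qed.

Lemma L1_chamber_xor C D : is_chamber a C -> is_chamber a D -> forall i,
  (i \in L1 a C D) = ((i \in L1 a c0 C) != (i \in L1 a c0 D)).
Proof. by move=> /chamber_sign_cell [y cy ->] /chamber_sign_cell [z cz ->]; exact: L1_sign_cell_xor. Qed.

Lemma L1_base_inj C D : is_chamber a C -> is_chamber a D ->
  L1 a c0 C = L1 a c0 D -> C = D.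
Proof.
move=> /chamber_sign_cell [y cy ->] /chamber_sign_cell [z cz ->] e.
apply: sign_cell_eq => i; apply: mulr_gt0_same_sign; rewrite ?lin_form_neq0 //.
have : (i \in L1 a c0 (sign_cell a y)) = (i \in L1 a c0 (sign_cell a z)) by rewrite e.
rewrite !L1_sign_cell // !neq0_mulr_lt0 ?lin_form_neq0 //.
by case: (f i x0 < 0); case: (f i y < 0); case: (f i z < 0).
Qed.

Lemma complement_opp : comp (- x0).
Proof. by move=> i; rewrite /hyp /= lin_formN => /eqP; rewrite oppr_eq0 => /eqP; apply: hx0. Qed.

Lemma opp_sign_cell : opp_chamber c0 = sign_cell a (- x0).
Proof.
rewrite /opp_chamber; apply/seteqP; split.
  by move=> _ [y sy <-] i; rewrite !lin_formN mulrNN; apply: sy.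
move=> y sy; exists (- y); last by rewrite opprK.
by move=> i; have := sy i; rewrite !lin_formN mulrN mulNr.
Qed.

Lemma L1_base_opp : L1 a c0 (opp_chamber c0) = finset.setT.
Proof.
rewrite opp_sign_cell; apply/setP => i.
rewrite finset.in_setT L1_sign_cell //; last exact: complement_opp.
by rewrite lin_formN mulrN oppr_lt0 mulrr_gt0 ?lin_form_neq0.
Qed.

Lemma L1_base_self : L1 a c0 c0 = finset.set0.
Proof.
apply/setP => i; rewrite finset.in_set0 L1_sign_cell //.
by apply/negbTE; rewrite -leNgt ltW ?mulrr_gt0 ?lin_form_neq0.
Qed.

Lemma base_chamber : is_chamber a c0.
Proof. exact: sign_cell_chamber. Qed.

End BaseChamber.

Lemma le_of_unit_steps (u : nat -> nat) N : u 0%N = 0%N ->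
  (forall k, (k < N)%N -> (u k.+1 <= (u k).+1)%N) -> forall k, (k <= N)%N -> (u k <= k)%N.
Proof.
move=> u0 step; elim=> [|k IH] kN; first by rewrite u0.
by apply: leq_trans (step k kN) _; rewrite ltnS IH // ltnW.
Qed.

Lemma unit_steps_id (u : nat -> nat) N : u 0%N = 0%N -> u N = N ->
  (forall k, (k < N)%N -> (u k.+1 <= (u k).+1)%N) -> forall k, (k <= N)%N -> u k = k.
Proof.
move=> u0 uN step k kN; apply/eqP; rewrite eqn_leq (le_of_unit_steps u0 step kN) /=.
suff low m : (m <= N)%N -> (N <= u (N - m) + m)%N.
  by have := low (N - k)%N (leq_subr _ _); rewrite subKn //; lia.
elim: m => [|m IH] mN; first by rewrite subn0 uN addn0.
have lt : (N - m.+1 < N)%N by lia.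
by have := step _ lt; rewrite subnSK //; have := IH (ltnW mN); lia.
Qed.

Section Symdiff.
Variables (T : finType) (A B D : {set T}).
Hypothesis hD : forall i, (i \in D) = ((i \in A) != (i \in B)).
Hypothesis D1 : #|D| = 1%N.

Lemma card_le_of_symdiff1 : (#|B| <= #|A|.+1)%N.
Proof.
have : B \subset A :|: D.
  by apply/fintype.subsetP => i iB; rewrite finset.in_setU hD iB; case: (i \in A).
move/subset_leq_card/leq_trans; apply.
by rewrite -addn1 -D1; exact: (leq_card_setU A D).1.
Qed.

Lemma subset_of_symdiff1 : #|B| = #|A|.+1 -> A \subset B.
Proof.
move/eqP/cards1P: D1 => [e De] cB.
have inD i : (i \in A) != (i \in B) -> i = e by rewrite -hD De finset.in_set1 => /eqP.
apply/fintype.subsetP => i iA; apply/negPn/negP => iB.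
have ie : i = e by apply: inD; rewrite iA (negbTE iB).
have : B \subset A.
  apply/fintype.subsetP => j jB; apply/negPn/negP => jA.
  have je : j = e by apply: inD; rewrite jB (negbTE jA).
  by move: jB; rewrite je -ie (negbTE iB).
by move/subset_leq_card; rewrite cB ltnn.
Qed.

End Symdiff.

Section Galleries.
Variables (R : realType) (d n : nat) (a : 'I_n -> 'rV[R]_d).
Local Notation comp := (arr_complement a).
Variable x0 : 'rV[R]_d.
Hypothesis hx0 : comp x0.
Local Notation c0 := (sign_cell a x0).

Definition crossed (r : seq (set 'rV[R]_d)) k := L1 a c0 (nth set0 r k).

Section Gallery.
Variable r : seq (set 'rV[R]_d).
Hypothesis hr : gallery a r c0 (opp_chamber c0).

Lemma gallery_chamber k : (k < size r)%N -> is_chamber a (nth set0 r k).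
Proof. by case: hr => _ _ _ hc _ kr; apply/hc/mem_nth. Qed.

Lemma L1_gallery_step k : (k.+1 < size r)%N -> forall i,
  (i \in L1 a (nth set0 r k) (nth set0 r k.+1)) =
  ((i \in crossed r k) != (i \in crossed r k.+1)).
Proof. by move=> kr; apply: L1_chamber_xor => //; apply: gallery_chamber; rewrite // ltnW. Qed.

Lemma card_L1_gallery_step k : (k.+1 < size r)%N ->
  #|L1 a (nth set0 r k) (nth set0 r k.+1)| = 1%N.
Proof. by case: hr => _ _ _ _; apply. Qed.

Lemma crossed0 : crossed r 0 = finset.set0.
Proof. by case: hr => _ hh _ _ _; rewrite /crossed nth0 hh L1_base_self. Qed.

Lemma crossed_last : crossed r (size r).-1 = finset.setT.
Proof. by case: hr => _ _ hl _ _; rewrite /crossed nth_last hl L1_base_opp. Qed.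

Lemma card_crossed_step k : (k < (size r).-1)%N ->
  (#|crossed r k.+1| <= #|crossed r k|.+1)%N.
Proof.
rewrite -ltnS prednK => [kr|]; last by case: hr; case: r.
exact: card_le_of_symdiff1 (L1_gallery_step kr) (card_L1_gallery_step kr).
Qed.

Lemma gallery_size_gt : (n < size r)%N.
Proof.
have sr : (0 < size r)%N by case: hr; case: r.
have u0 : #|crossed r 0| = 0%N by rewrite crossed0 cards0.
have := le_of_unit_steps (u := fun k => #|crossed r k|) u0 card_crossed_step (leqnn _).
rewrite /= crossed_last cardsT card_ord => le_n.
by apply: leq_ltn_trans le_n _; rewrite ltn_predL.
Qed.

Hypothesis hs : size r = n.+1.

Lemma card_crossed k : (k <= n)%N -> #|crossed r k| = k.
Proof.
apply: (@unit_steps_id (fun k => #|crossed r k|)); first by rewrite crossed0 cards0.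
  by rewrite -[X in crossed r X]/(n.+1.-1) -hs crossed_last cardsT card_ord.
by move=> m mn; apply: card_crossed_step; rewrite hs.
Qed.

Lemma crossed_sub k : (k < n)%N -> crossed r k \subset crossed r k.+1.
Proof.
move=> kn; have kr : (k.+1 < size r)%N by rewrite hs.
apply: subset_of_symdiff1 (L1_gallery_step kr) (card_L1_gallery_step kr) _.
by rewrite (card_crossed kn) (card_crossed (ltnW kn)).
Qed.

Lemma maximal_chain_crossed : maximal_chain (crossed r).
Proof.
split; [exact: crossed0| |exact: crossed_sub|].
  by rewrite -[X in crossed r X]/(n.+1.-1) -hs crossed_last.
move=> k kn; rewrite cardsD (finset.setIidPr (crossed_sub kn)).
by rewrite (card_crossed kn) (card_crossed (ltnW kn)) subSnn.
Qed.

Lemma crosses_atP k i :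
  crosses_at a r k i <-> [/\ (k < n)%N, i \in crossed r k.+1 & i \notin crossed r k].
Proof.
rewrite /crosses_at hs ltnS; split => [[kn]|[kn i1 i0]]; last first.
  by split => //; rewrite L1_gallery_step ?hs // i1 (negbTE i0).
rewrite L1_gallery_step ?hs //.
have sub := fintype.subsetP (crossed_sub kn) i.
have [ik|nik] := boolP (i \in crossed r k); first by rewrite (sub ik).
by case: (i \in crossed r k.+1).
Qed.

Lemma crosses_beforeP i j : crosses_before a r i j <-> chain_before (crossed r) i j.
Proof.
have hc := maximal_chain_crossed; split.
  move=> [k [l [kl /crosses_atP [kn ik _] /crosses_atP [ln jl1 jl]]]].
  exists k.+1; split => //; apply: contra jl.
  by apply: (maximal_chain_mem hc) => //; rewrite ltnW.
move=> [k [kn ik jk]].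
have i0 : i \notin crossed r 0 by rewrite crossed0 finset.in_set0.
have [k' [_ k'k ik' ik'1]] := @exists_rising_step (fun m => i \in crossed r m) 0 k (leq0n _) i0 ik.
have jn : j \in crossed r n by case: hc => _ -> _ _; rewrite finset.in_setT.
have [l [kl ln jl jl1]] := @exists_rising_step (fun m => j \in crossed r m) k n kn jk jn.
exists k', l; split; first exact: leq_trans k'k kl.
  by apply/crosses_atP; split => //; exact: leq_trans k'k kn.
by apply/crosses_atP.
Qed.

End Gallery.
End Galleries.

Lemma dot_self_gt0 (R : realType) d (v : 'rV[R]_d) : v != 0 -> 0 < (v *m v^T) 0 0.
Proof.
move=> v0; have [k vk] : exists k, v 0 k != 0.
  apply/existsP; apply: contraR v0 => /existsPn vk; apply/eqP/matrixP => i k.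
  by rewrite (ord1 i) mxE; apply/eqP/negbNE/vk.
rewrite mxE (bigD1 k) //= mxE; apply: lt_le_trans (mulrr_gt0 vk) _.
by rewrite lerDl; apply: sumr_ge0 => j _; rewrite mxE -expr2 sqr_ge0.
Qed.

Lemma mx11_eq0 (R : realType) (A : 'M[R]_1) : (A == 0) = (A 0 0 == 0).
Proof.
apply/eqP/eqP => [->|h]; first by rewrite mxE.
by apply/matrixP => i k; rewrite !ord1 h mxE.
Qed.

Lemma middle_sign (R : realType) (lp lq ls wp wq ws : R) :
  lp * lq < 0 -> ls * lq < 0 -> lp * wp + lq * wq + ls * ws = 0 ->
  (wp < 0 -> ws < 0 -> wq < 0) /\ (0 < wp -> 0 < ws -> 0 < wq).
Proof.
move=> pq sq e.
have e' : lq * (lq * wq) = - (lp * lq) * wp - (ls * lq) * ws.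
  have -> : lq * wq = - (lp * wp) - ls * ws by lra.
  ring.
by split => hp hs; nra.
Qed.

Lemma sign_split3 (R : realType) (lp lq ls Wp Wq Ws : R) :
  lp != 0 -> lq != 0 -> ls != 0 -> 0 < Wp -> 0 < Wq -> 0 < Ws ->
  lp * Wp + lq * Wq + ls * Ws = 0 ->
  [\/ lp * lq < 0 /\ ls * lq < 0, lq * lp < 0 /\ ls * lp < 0 |
      lp * ls < 0 /\ lq * ls < 0].
Proof.
move=> hp hq hs Wp0 Wq0 Ws0 e.
have sgn (x : R) : x != 0 -> x < 0 \/ 0 < x.
  move=> x0; have [xn|xp] := ltP x 0; [by left|right].
  by rewrite lt_neqAle eq_sym x0 xp.
case: (sgn _ hp) => p0; case: (sgn _ hq) => q0; case: (sgn _ hs) => s0;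
  do ?[exfalso; nra]; do ?[by constructor 1; split; nra];
  do ?[by constructor 2; split; nra]; by constructor 3; split; nra.
Qed.

Section Pencils.
Variables (R : realType) (d n : nat) (a : 'I_n -> 'rV[R]_d).
Local Notation f := (lin_form a).
Local Notation comp := (arr_complement a).
Hypothesis harr : arrangement a.

Lemma lin_form_self_gt0 i : 0 < f i (a i).
Proof. by apply: dot_self_gt0; case: harr. Qed.

(* Otherwise [f j] vanishes on the kernel of [f i], so it is a multiple of [f i] and the
   two hyperplanes coincide. *)
Lemma exists_separating_point i j : i != j -> exists z, f i z = 0 /\ f j z != 0.
Proof.
move=> ij; apply: contrapT => /forallNP nsep.
have H z : f i z = 0 -> f j z = 0.
  by move=> hz; apply/eqP/negPn/negP => hjz; apply: (nsep z).
have fi0 : f i (a i) != 0 by rewrite gt_eqF ?lin_form_self_gt0.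
pose c := f j (a i) / f i (a i).
have lin x : f j x = c * f i x.
  have : f i (x - (f i x / f i (a i)) *: a i) = 0.
    by rewrite lin_formD lin_formN lin_formZ mulfVK // subrr.
  move/H; rewrite lin_formD lin_formN lin_formZ => /eqP; rewrite subr_eq0 => /eqP ->.
  by rewrite /c [RHS]mulrC mulrA [RHS]mulrAC.
have c0 : c != 0.
  by apply/eqP => c0; have := lin_form_self_gt0 j; rewrite lin c0 mul0r ltxx.
case: harr => _ hinj; move/eqP: ij; apply; apply: hinj.
apply/seteqP; split => x; rewrite /hyp /= => hx; first exact: H.
by move: hx; rewrite lin => /eqP; rewrite mulf_eq0 (negbTE c0) => /eqP.
Qed.

Lemma dual_pair i j : i != j ->
  exists e1 e2, [/\ f i e1 = 1, f j e1 = 0, f i e2 = 0 & f j e2 = 1].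
Proof.
move=> ij; have [z [z1 z2]] := exists_separating_point ij.
have [w [w1 w2]] := exists_separating_point (contra_neq esym ij).
by exists ((f i w)^-1 *: w), ((f j z)^-1 *: z); rewrite !lin_formZ w1 z1 !mulr0 !mulVf.
Qed.

Definition hyp_meet i j : set 'rV[R]_d :=
  [set x | forall k, k \in [set i; j]%SET -> hyp a k x].

Lemma hyp_meetP i j x : hyp_meet i j x <-> f i x = 0 /\ f j x = 0.
Proof.
split; first by move=> h; split; apply: h; rewrite !finset.inE eqxx ?orbT.
by move=> [hi hj] k; rewrite !finset.inE => /orP[] /eqP ->.
Qed.

Lemma L2_hyp_meet i j : i != j -> L2 a (hyp_meet i j).
Proof.
move=> ij; split; last by exists [set i; j]%SET.
have [e1 [e2 [h1 h2 h3 h4]]] := dual_pair ij.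
pose M : 'M[R]_(d, 1 + 1) := row_mx (a i)^T (a j)^T.
have rM : \rank M = 2%N.
  apply/eqP; rewrite eqn_leq rank_leq_col /=.
  have EM : col_mx e1 e2 *m M = 1%:M.
    rewrite mul_col_mx !mul_mx_row (scalar_mx_block 1 1 1) /block_mx.
    congr col_mx; congr row_mx; apply/matrixP => k l;
      rewrite !ord1 [RHS]mxE ?eqxx ?mulr1n; [exact: h1|exact: h2|exact: h3|exact: h4].
  by have := mxrankM_maxr (col_mx e1 e2) M; rewrite EM mxrank1.
exists (kermx M); split.
  by rewrite mxrank_ker rM; have := rank_leq_row M; rewrite rM; lia.
apply/seteqP; split => x /=; rewrite sub_kermx mul_mx_row row_mx_eq0 !mx11_eq0.
  by move/hyp_meetP => [hi hj]; apply/andP; split; apply/eqP.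
by move=> /andP[/eqP hi /eqP hj]; apply/hyp_meetP.
Qed.

Section Pencil.
Variables (i j : 'I_n) (e1 e2 : 'rV[R]_d).
Hypotheses (h1 : f i e1 = 1) (h2 : f j e1 = 0) (h3 : f i e2 = 0) (h4 : f j e2 = 1).

Lemma lin_form_pencil p : hyp_meet i j `<=` hyp a p ->
  forall x, f p x = f i x * f p e1 + f j x * f p e2.
Proof.
move=> sub x; apply/eqP; rewrite -subr_eq0; apply/eqP.
have : hyp_meet i j (x - f i x *: e1 - f j x *: e2).
  by apply/hyp_meetP; rewrite !lin_formD !lin_formN !lin_formZ h1 h2 h3 h4; split; ring.
by move/sub; rewrite /hyp /= !lin_formD !lin_formN !lin_formZ => <-; ring.
Qed.

Lemma pencil_coef_neq0 p : hyp_meet i j `<=` hyp a p -> f p e1 != 0 \/ f p e2 != 0.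
Proof.
move=> sub; apply: contrapT => /not_orP[/negP/negPn/eqP p1 /negP/negPn/eqP p2].
have := lin_form_self_gt0 p.
by rewrite (lin_form_pencil sub) p1 p2 !mulr0 addr0 ltxx.
Qed.

Lemma pencil_hyp_sub q s : hyp_meet i j `<=` hyp a q -> hyp_meet i j `<=` hyp a s ->
  f q e1 * f s e2 - f s e1 * f q e2 = 0 -> hyp a q `<=` hyp a s.
Proof.
move=> sq ss det x; rewrite /hyp /= => hq.
have Eq := lin_form_pencil sq x; have Es := lin_form_pencil ss x.
have k1 : f q e1 * f s x = f s e1 * f q x + f j x * (f q e1 * f s e2 - f s e1 * f q e2).
  by rewrite Eq Es; ring.
have k2 : f q e2 * f s x = f s e2 * f q x - f i x * (f q e1 * f s e2 - f s e1 * f q e2).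
  by rewrite Eq Es; ring.
rewrite hq det !mulr0 addr0 subr0 in k1 k2.
by case: (pencil_coef_neq0 sq) => h; apply/eqP;
  [move/eqP: k1|move/eqP: k2]; rewrite mulf_eq0 (negbTE h).
Qed.

Lemma pencil_det_neq0 q s : q != s -> hyp_meet i j `<=` hyp a q ->
  hyp_meet i j `<=` hyp a s -> f q e1 * f s e2 - f s e1 * f q e2 != 0.
Proof.
move=> qs sq ss; apply/eqP => det; case: harr => _ hinj.
move/eqP: qs; apply; apply: hinj; apply/seteqP; split; first exact: pencil_hyp_sub.
by apply: pencil_hyp_sub => //; apply/eqP; rewrite -oppr_eq0 opprB det.
Qed.

End Pencil.

Variable x0 : 'rV[R]_d.
Hypothesis hx0 : comp x0.
Local Notation c0 := (sign_cell a x0).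

Definition L1_between q p s := forall y, comp y ->
  (p \in L1 a c0 (sign_cell a y) -> s \in L1 a c0 (sign_cell a y) ->
     q \in L1 a c0 (sign_cell a y)) /\
  (p \notin L1 a c0 (sign_cell a y) -> s \notin L1 a c0 (sign_cell a y) ->
     q \notin L1 a c0 (sign_cell a y)).

Lemma L1_between_of_relation q p s (lp lq ls : R) :
  (forall y, lp * (f p x0 * f p y) + lq * (f q x0 * f q y) + ls * (f s x0 * f s y) = 0) ->
  lp * lq < 0 -> ls * lq < 0 -> L1_between q p s.
Proof.
move=> rel pq sq y cy; rewrite !L1_sign_cell //.
have [neg pos] := middle_sign pq sq (rel y).
have nz k : f k x0 * f k y != 0 by rewrite mulf_neq0 // lin_form_neq0.
split; first exact: neg.
by rewrite -!leNgt !le_eqVlt !(eq_sym 0) !(negbTE (nz _)); exact: pos.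
Qed.

(* Any three hyperplanes through a codimension-two subspace satisfy a linear relation
   whose coefficients are 2x2 minors; the signs of those coefficients decide which
   hyperplane lies between the other two. *)
Lemma pencil_L1_between i j p q s : i != j ->
  hyp_meet i j `<=` hyp a p -> hyp_meet i j `<=` hyp a q -> hyp_meet i j `<=` hyp a s ->
  p != q -> q != s -> p != s ->
  [\/ L1_between q p s, L1_between p q s | L1_between s p q].
Proof.
move=> ij sp sq ss pq qs ps; have [e1 [e2 [h1 h2 h3 h4]]] := dual_pair ij.
pose cp := f q e1 * f s e2 - f s e1 * f q e2.
pose cq := f s e1 * f p e2 - f p e1 * f s e2.
pose cs := f p e1 * f q e2 - f q e1 * f p e2.
have rel y : cp * f p y + cq * f q y + cs * f s y = 0.
  rewrite (lin_form_pencil h1 h2 h3 h4 sp y) (lin_form_pencil h1 h2 h3 h4 sq y).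
  by rewrite (lin_form_pencil h1 h2 h3 h4 ss y) /cp /cq /cs; ring.
have det := pencil_det_neq0 h1 h2 h3 h4.
have ncp : cp != 0 by apply: det.
have ncq : cq != 0 by apply: det; rewrite // eq_sym.
have ncs : cs != 0 by apply: det.
have fx k : f k x0 != 0 by apply: lin_form_neq0.
pose lp := cp / f p x0; pose lq := cq / f q x0; pose ls := cs / f s x0.
have rel' y : lp * (f p x0 * f p y) + lq * (f q x0 * f q y) + ls * (f s x0 * f s y) = 0.
  by rewrite -(rel y) /lp /lq /ls !mulrA !mulfVK.
have W k : 0 < f k x0 * f k x0 by apply: mulrr_gt0.
have nz c k : c != 0 -> c / f k x0 != 0 by move=> c0; rewrite mulf_neq0 // invr_eq0.
case: (sign_split3 (nz _ p ncp) (nz _ q ncq) (nz _ s ncs) (W p) (W q) (W s) (rel' x0)).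
- by move=> [? ?]; constructor 1; apply: (L1_between_of_relation rel').
- move=> [? ?]; constructor 2; apply: (@L1_between_of_relation p q s lq lp ls) => // y.
  by rewrite -(rel' y); ring.
- move=> [? ?]; constructor 3; apply: (@L1_between_of_relation s p q lp ls lq) => // y.
  by rewrite -(rel' y); ring.
Qed.

Lemma chain_between_crossed r q p s : gallery a r c0 (opp_chamber c0) ->
  size r = n.+1 -> L1_between q p s -> chain_between (crossed a x0 r) q p s.
Proof.
move=> hr hs hb k kn.
have /chamber_sign_cell [y cy ey] : is_chamber a (nth set0 r k).
  by apply: (gallery_chamber hr); rewrite hs ltnS.
by rewrite /crossed ey; exact: hb.
Qed.

End Pencils.

Lemma gallery_rcons (R : realType) d n (a : 'I_n -> 'rV[R]_d) g c c' D :
  gallery a g c c' -> is_chamber a D -> Defs.adjacent a c' D -> gallery a (rcons g D) c D.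
Proof.
case=> ne hh hl hc hadj hD hc'D; split.
- by case: g {ne hh hl hc hadj}.
- by move: ne hh; case: g {hl hc hadj}.
- by rewrite last_rcons.
- by move=> C; rewrite mem_rcons inE => /orP[/eqP ->|/hc].
move=> m; rewrite size_rcons ltnS => hm.
have [hm'|hm'] := ltnP m.+1 (size g).
  by rewrite !nth_rcons hm' (ltnW hm'); exact: hadj.
have em : m.+1 = size g by apply/eqP; rewrite eqn_leq hm hm'.
rewrite !nth_rcons -em ltnSn ltnn eqxx.
by have -> : nth set0 g m = c' by rewrite -hl -nth_last -em.
Qed.

Lemma exists_time_below (T : finType) (R : realType) (tt : T -> R) (s : R) :
  exists t', [/\ t' < s, forall j, (tt j < t') = (tt j < s) & forall j, tt j != t'].
Proof.
case: (pickP (fun j => tt j < s)) => [j0 j0s|none]; last first.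
  have sj j : s <= tt j by rewrite leNgt; apply/negbT/none.
  exists (s - 1); split => [|j|j]; first lra.
    by have := sj j => ?; apply/idP/idP => ?; lra.
  by apply/eqP => e; have := sj j; lra.
case: (@Order.TotalTheory.arg_maxP _ _ _ j0 (fun j => tt j < s) tt j0s) => jm jms jmax.
have le_jm j : tt j < s -> tt j <= tt jm by apply: jmax.
exists ((tt jm + s) / 2); split => [|j|j]; first lra.
  apply/idP/idP => [|js]; first lra.
  by have := le_jm j js; lra.
apply/eqP => e; have [js|] := ltP (tt j) s; last lra.
by have := le_jm j js; lra.
Qed.

Section AvoidHyperplanes.
Variables (R : realType) (d : nat).

Definition dotv (v w : 'rV[R]_d) := (w *m v^T) 0 0.

Lemma dotvC v w : dotv v w = dotv w v.
Proof. by rewrite /dotv !mxE; apply: eq_bigr => k _; rewrite !mxE mulrC. Qed.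

Lemma dotvD v w1 w2 : dotv v (w1 + w2) = dotv v w1 + dotv v w2.
Proof. by rewrite /dotv mulmxDl mxE. Qed.

Lemma dotvZ v k w : dotv v (k *: w) = k * dotv v w.
Proof. by rewrite /dotv -scalemxAl mxE. Qed.

Lemma dotvB v w1 w2 : dotv v (w1 - w2) = dotv v w1 - dotv v w2.
Proof. by rewrite dotvD -scaleN1r dotvZ mulN1r. Qed.

Lemma dot0v w : dotv 0 w = 0.
Proof. by rewrite /dotv trmx0 mulmx0 mxE. Qed.

(* Induction on the family: if [w] lies on the hyperplane of [g t], replace it by
   [w + lam *: g t] with [lam] larger than all the ratios that could create a new zero. *)
Lemma exists_dotv_neq0 (T : finType) (g : T -> 'rV[R]_d) : (forall t, g t != 0) ->
  exists w, forall t, dotv (g t) w != 0.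
Proof.
move=> gnz; suff [w hw] : exists w, forall t, t \in enum T -> dotv (g t) w != 0.
  by exists w => t; apply: hw; rewrite mem_enum.
elim: (enum T) => [|t s [w hw]]; first by exists 0.
have [ht|ht] := eqVneq (dotv (g t) w) 0; last first.
  by exists w => t'; rewrite inE => /orP[/eqP ->|/hw].
pose ratio t' := `|dotv (g t') w / dotv (g t') (g t)|.
pose lam := 1 + \sum_(t' : T) ratio t'.
have lam_gt t' : ratio t' < lam.
  rewrite /lam ltr_pwDl // (bigD1 t') //= lerDl.
  by apply: sumr_ge0 => ? _; exact: normr_ge0.
have lam0 : 0 < lam by apply: le_lt_trans (lam_gt t); exact: normr_ge0.
exists (w + lam *: g t) => t'; rewrite inE => /orP[/eqP ->|ts].
  rewrite dotvD dotvZ ht add0r mulf_neq0 ?gt_eqF //.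
  exact: dot_self_gt0.
rewrite dotvD dotvZ; have [hu|hu] := eqVneq (dotv (g t') (g t)) 0.
  by rewrite hu mulr0 addr0 hw.
apply/eqP => e.
have el : lam = - (dotv (g t') w / dotv (g t') (g t)).
  by apply: (mulIf hu); rewrite mulNr mulfVK // -(subr0 (lam * _)) -e; ring.
by have := lam_gt t'; rewrite /ratio el ltNge -normrN ler_norm.
Qed.

End AvoidHyperplanes.

Section GenericLine.
Variables (R : realType) (d n : nat) (a : 'I_n -> 'rV[R]_d).
Local Notation f := (lin_form a).
Local Notation comp := (arr_complement a).
Hypothesis harr : arrangement a.
Variable x0 : 'rV[R]_d.
Hypothesis hx0 : comp x0.
Local Notation c0 := (sign_cell a x0).

Lemma exists_direction_distinct_times :
  exists w, forall i j, i != j -> f i x0 * f j w - f j x0 * f i w != 0.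
Proof.
pose g t : 'rV[R]_d := if t.1 == t.2 then a t.1 else f t.1 x0 *: a t.2 - f t.2 x0 *: a t.1.
have gdot i j w : i != j -> dotv (g (i, j)) w = f i x0 * f j w - f j x0 * f i w.
  by move=> ij; rewrite /g /= (negbTE ij) dotvC dotvB !dotvZ !(dotvC w).
have gnz t : g t != 0.
  case: t => i j; have [<-|ij] := eqVneq i j; first by rewrite /g eqxx; case: harr.
  have [z [z1 z2]] := exists_separating_point harr ij.
  move: (mulf_neq0 (lin_form_neq0 i hx0) z2); apply: contra_neq => g0.
  by have := gdot i j z ij; rewrite g0 dot0v z1 mulr0 subr0 => <-.
have [w hw] := exists_dotv_neq0 gnz.
by exists w => i j ij; rewrite -gdot.
Qed.

Lemma exists_generic_direction : exists w,
  (forall i j, i != j -> f i x0 * f j w - f j x0 * f i w != 0) /\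
  (forall i, `|f i w| < `|f i x0|).
Proof.
have [w hw] := exists_direction_distinct_times.
have nx i : 0 < `|f i x0| by rewrite normr_gt0 lin_form_neq0.
pose D := 1 + \sum_(i : 'I_n) `|f i w| / `|f i x0|.
have ge0 i : 0 <= `|f i w| / `|f i x0| by rewrite divr_ge0 // ltW.
have le_sum i : `|f i w| / `|f i x0| <= \sum_(i : 'I_n) `|f i w| / `|f i x0|.
  by rewrite (bigD1 i) //= lerDl sumr_ge0.
have S0 : 0 <= \sum_(i : 'I_n) `|f i w| / `|f i x0| by exact: sumr_ge0.
have D0 : 0 < D by rewrite /D; lra.
exists (D^-1 *: w); split => [i j ij|i].
  rewrite !lin_formZ; move: (mulf_neq0 (invr_neq0 (lt0r_neq0 D0)) (hw i j ij)).
  by apply: contra_neq => e; rewrite -[RHS]e; ring.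
have key : `|f i w| / `|f i x0| < D by have := le_sum i; rewrite /D; lra.
rewrite lin_formZ normrM ger0_norm ?invr_ge0 ?ltW // mulrC ltr_pdivrMr //.
by rewrite -[X in X < _](divfK (lt0r_neq0 (nx i))) [X in _ < X]mulrC ltr_pM2r.
Qed.

Section Line.
Variable w : 'rV[R]_d.
Hypothesis hw_times : forall i j, i != j -> f i x0 * f j w - f j x0 * f i w != 0.
Hypothesis hw_small : forall i, `|f i w| < `|f i x0|.

Definition line_point (t : R) : 'rV[R]_d := (1 - 2 * t) *: x0 + t *: w.
Definition slope i := 2 * f i x0 - f i w.
Definition crossing_time i := f i x0 / slope i.

Lemma lin_form_direction_lt i : f i x0 * f i w < f i x0 * f i x0.
Proof.
have hA := lin_form_neq0 i hx0.
have e : `|f i x0| * `|f i x0| = f i x0 * f i x0.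
  by rewrite -normrM ger0_norm // ltW // mulrr_gt0.
apply: le_lt_trans (ler_norm _) _.
by rewrite normrM -e ltr_pM2l ?normr_gt0.
Qed.

Lemma slope_mul_gt0 i : 0 < f i x0 * slope i.
Proof.
have := lin_form_direction_lt i; have := mulrr_gt0 (lin_form_neq0 i hx0).
rewrite /slope; nra.
Qed.

Lemma slope_neq0 i : slope i != 0.
Proof. by apply: contraTneq (slope_mul_gt0 i) => ->; rewrite mulr0 ltxx. Qed.

Lemma lin_form_line_point i t : f i (line_point t) = slope i * (crossing_time i - t).
Proof.
rewrite mulrBr [slope i * _]mulrC /crossing_time divfK ?slope_neq0 //.
by rewrite /line_point lin_formD !lin_formZ /slope; ring.
Qed.

Lemma sign_line_point i t : (f i x0 * f i (line_point t) < 0) = (crossing_time i < t).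
Proof. by rewrite lin_form_line_point mulrA pmulr_rlt0 ?slope_mul_gt0 // subr_lt0. Qed.

Lemma line_point_complement t : (forall i, crossing_time i != t) -> comp (line_point t).
Proof.
move=> ht i; rewrite /hyp /= lin_form_line_point => /eqP.
by rewrite mulf_eq0 (negbTE (slope_neq0 i)) subr_eq0 (negbTE (ht i)).
Qed.

Lemma L1_line_point t : (forall i, crossing_time i != t) -> forall i,
  (i \in L1 a c0 (sign_cell a (line_point t))) = (crossing_time i < t).
Proof.
by move=> ht i; rewrite L1_sign_cell ?sign_line_point //; exact: line_point_complement.
Qed.

Lemma crossing_time_inj i j : i != j -> crossing_time i != crossing_time j.
Proof.
move=> ij; rewrite /crossing_time eqr_div ?slope_neq0 //.
apply: contra (hw_times ij) => /eqP e.
have -> : f i x0 * f j w - f j x0 * f i w =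
  - (f i x0 * slope j - f j x0 * slope i) by rewrite /slope; ring.
by rewrite e subrr oppr0.
Qed.

Lemma crossing_time_lt1 i : crossing_time i < 1.
Proof.
rewrite -sign_line_point /line_point lin_formD !lin_formZ mul1r.
by have := lin_form_direction_lt i; nra.
Qed.

(* Induction on the number of crossing times before [t]: just below the last of them the
   point lies in the previous chamber, which is separated from the current one by a
   single hyperplane. *)
Lemma gallery_along_line k t : (forall i, crossing_time i != t) ->
  #|[set i | crossing_time i < t]%SET| = k ->
  exists g, gallery a g c0 (sign_cell a (line_point t)) /\ size g = k.+1.
Proof.
elim: k t => [|k IH] t ht hk.
  exists [:: c0]; split => //.
  have -> : sign_cell a (line_point t) = c0.
    apply: L1_base_inj => //; first exact: sign_cell_chamber (line_point_complement ht).
      exact: base_chamber.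
    rewrite L1_base_self //; apply/setP => i; rewrite L1_line_point // finset.in_set0.
    by have /setP/(_ i) := cards0_eq hk; rewrite !finset.inE.
  by split => // C; rewrite inE => /eqP ->; exact: base_chamber.
set S := [set i | crossing_time i < t]%SET.
have [i0 i0S] : exists i0, i0 \in S by apply/card_gt0P; rewrite hk.
case: (Order.TotalTheory.arg_maxP crossing_time i0S) => im imS imax.
have memS j : (j \in S) = (crossing_time j < t) by rewrite finset.inE.
have imt : crossing_time im < t by rewrite -memS.
have [t' [_ below nocross]] := exists_time_below crossing_time (crossing_time im).
have belowS j : (crossing_time j < t') = (j \in S :\ im).
  rewrite below finset.in_setD1 memS.
  have [->|jim] := eqVneq j im; first by rewrite ltxx.
  apply/idP/idP => [lt|jt]; first exact: lt_trans lt imt.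
  by rewrite lt_neqAle crossing_time_inj //=; apply: imax; move: jt; rewrite -memS.
have hk' : #|[set i | crossing_time i < t']%SET| = k.
  have -> : [set i | crossing_time i < t']%SET = S :\ im.
    by apply/setP => j; rewrite finset.inE belowS.
  by move: (cardsD1 im S); rewrite (imS : im \in S) hk add1n => -[].
have [g [hg sg]] := IH t' nocross hk'.
exists (rcons g (sign_cell a (line_point t))); rewrite size_rcons sg; split => //.
apply: gallery_rcons hg (sign_cell_chamber (line_point_complement ht)) _.
apply/eqP/cards1P; exists im; apply/setP => j.
rewrite (L1_sign_cell_xor hx0 (line_point_complement nocross) (line_point_complement ht)).
rewrite !L1_line_point // belowS finset.in_setD1 memS finset.in_set1.
have [->|jim] := eqVneq j im; first by rewrite imt.
by case: (crossing_time j < t).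
Qed.

End Line.

Lemma exists_gallery_to_opposite :
  exists g, gallery a g c0 (opp_chamber c0) /\ size g = n.+1.
Proof.
have [w [hw1 hw2]] := exists_generic_direction.
have lt1 := crossing_time_lt1 hw2.
have ht i : crossing_time w i != 1 by rewrite lt_eqF.
have hk : #|[set i | crossing_time w i < 1]%SET| = n.
  have -> : [set i | crossing_time w i < 1]%SET = finset.setT.
    by apply/setP => i; rewrite !finset.inE lt1.
  by rewrite cardsT card_ord.
have [g [hg sg]] := gallery_along_line hw1 hw2 ht hk.
exists g; split => //; suff -> : opp_chamber c0 = sign_cell a (line_point w 1) by [].
apply: L1_base_inj => //; first by rewrite opp_sign_cell; exact: sign_cell_chamber (complement_opp hx0).
  exact: sign_cell_chamber (line_point_complement hw2 ht).
rewrite L1_base_opp //; apply/setP => i.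
by rewrite finset.in_setT L1_line_point // lt1.
Qed.

End GenericLine.

Section MinimalGalleries.
Variables (R : realType) (d n : nat) (a : 'I_n -> 'rV[R]_d).
Hypothesis harr : arrangement a.
Variable x0 : 'rV[R]_d.
Hypothesis hx0 : arr_complement a x0.
Local Notation c0 := (sign_cell a x0).
Local Notation minimal r := (minimal_gallery a r c0 (opp_chamber c0)).
Local Notation crossed := (crossed a x0).

Lemma minimal_gallery_size r : minimal r -> size r = n.+1.
Proof.
move=> [hr hmin]; have [g [hg sg]] := exists_gallery_to_opposite harr hx0.
by have := hmin g hg; have := gallery_size_gt hx0 hr; rewrite sg; lia.
Qed.

Lemma maximal_chain_minimal r : minimal r -> maximal_chain (crossed r).
Proof. by move=> hr; case: (hr) => g _; exact: (maximal_chain_crossed hx0 g (minimal_gallery_size hr)). Qed.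

Lemma crosses_before_minimal r i j : minimal r ->
  crosses_before a r i j <-> chain_before (crossed r) i j.
Proof. by move=> hr; case: (hr) => g _; exact: (crosses_beforeP hx0 g (minimal_gallery_size hr)). Qed.

Definition pencil i j : pred 'I_n := [pred k | `[< hyp_meet a i j `<=` hyp a k >]].

Lemma pencil_middle r0 r i j : minimal r0 -> minimal r -> i != j ->
  forall p q s, p \in pencil i j -> q \in pencil i j -> s \in pencil i j ->
  p != q -> q != s -> p != s ->
  [\/ chain_between (crossed r0) q p s /\ chain_between (crossed r) q p s,
      chain_between (crossed r0) p q s /\ chain_between (crossed r) p q s |
      chain_between (crossed r0) s p q /\ chain_between (crossed r) s p q].
Proof.
move=> h0 h ij p q s /asboolP sp /asboolP sq /asboolP ss pq qs ps.
have tr r' q' p' s' : minimal r' -> L1_between a x0 q' p' s' ->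
    chain_between (crossed r') q' p' s'.
  by move=> hr' hb; case: (hr') => g' _; exact: chain_between_crossed (minimal_gallery_size hr') hb.
by case: (pencil_L1_between harr hx0 ij sp sq ss pq qs ps) => hb;
  [constructor 1|constructor 2|constructor 3]; split; apply: tr.
Qed.

Lemma L2g_hyp_meet r0 r i j : minimal r0 -> minimal r -> i != j ->
  L2g a r0 r (hyp_meet a i j) <-> flipped (crossed r0) (crossed r) i j.
Proof.
move=> h0 h ij.
have hi : hyp_meet a i j `<=` hyp a i by move=> x /hyp_meetP[].
have hj : hyp_meet a i j `<=` hyp a j by move=> x /hyp_meetP[].
split => [[_ [p [q [sp sq /(crosses_before_minimal _ _ h0) b0 /(crosses_before_minimal _ _ h) b]]]]|].
  have [pI qI] : p \in pencil i j /\ q \in pencil i j by split; apply/asboolP.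
  have [iI jI] : i \in pencil i j /\ j \in pencil i j by split; apply/asboolP.
  have pq := chain_before_neq b0.
  apply/(flipped_all (maximal_chain_minimal h0) (maximal_chain_minimal h)
    (pencil_middle h0 h ij) pI qI iI jI pq ij).
  by left.
move=> fij; split; first exact: L2_hyp_meet.
by case: fij => [[b0 b]|[b0 b]]; [exists i, j|exists j, i]; split => //;
  apply/crosses_before_minimal.
Qed.

Lemma minimal_gallery_L2g_inj r0 r r' : minimal r0 -> minimal r -> minimal r' ->
  L2g a r0 r = L2g a r0 r' -> r = r'.
Proof.
move=> h0 h h' hL.
have before_eq i j : chain_before (crossed r) i j <-> chain_before (crossed r') i j.
  have [<-|ij] := eqVneq i j.
    by split => /chain_before_neq; rewrite eqxx.
  apply: (chain_before_of_flipped (maximal_chain_minimal h0) (maximal_chain_minimal h)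
    (maximal_chain_minimal h') ij).
  by rewrite -(L2g_hyp_meet h0 h ij) -(L2g_hyp_meet h0 h' ij) hL.
have eqF := maximal_chain_eq (maximal_chain_minimal h) (maximal_chain_minimal h') before_eq.
apply: (@eq_from_nth _ set0) => [|k]; first by rewrite !minimal_gallery_size.
rewrite minimal_gallery_size // ltnS => kn.
have [[g _] [g' _]] := (h, h').
apply: (L1_base_inj hx0); last exact: eqF.
  by apply: (gallery_chamber g); rewrite minimal_gallery_size // ltnS.
by apply: (gallery_chamber g'); rewrite minimal_gallery_size // ltnS.
Qed.

End MinimalGalleries.

Unset Implicit Arguments.

Theorem proposition2p3 (R : realType) (d n : nat) (a : 'I_n -> 'rV[R]_d) :
  arrangement a -> essential a ->
  forall c0 : set 'rV[R]_d, is_chamber a c0 ->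
  (forall c c' : set 'rV[R]_d, is_chamber a c -> is_chamber a c' ->
     L1 a c0 c = L1 a c0 c' -> c = c') /\
  (forall r0 : seq (set 'rV[R]_d),
     minimal_gallery a r0 c0 (opp_chamber c0) ->
     forall r r' : seq (set 'rV[R]_d),
       minimal_gallery a r c0 (opp_chamber c0) ->
       minimal_gallery a r' c0 (opp_chamber c0) ->
       L2g a r0 r = L2g a r0 r' -> r = r').
Proof.
move=> harr _ c0 /chamber_sign_cell [x0 hx0 ->]; split.
  by move=> c c'; exact: L1_base_inj.
by move=> r0 h0 r r'; exact: minimal_gallery_L2g_inj.
Qed.
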